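(* Let $M=2Z+1$ with $Z\ge 1$ an integer, and let $\gamma_1,\dots,\gamma_{M-1}$ be nonzero real numbers and $J_1,\dots,J_{M-1}$ real numbers. Consider $$H_{\gamma J}=\sum_{m=1}^{M-1}\Big(J_m c_{m+1}^\dagger c_m\sigma_{m+1}^+ + \text{h.c.}\Big) - \sum_{m=1}^{M-1}\Big(\gamma_m c_{m+1}^\dagger c_m + \text{h.c.}\Big)$$ on the open chain of $M$ sites. Then the subspace of states with exactly one fermion and with spin on site $1$ equal to $|\uparrow\rangle$ contains $2^{M-1}$ linearly independent states $|\Psi\rangle$ with $H_{\gamma J}|\Psi\rangle=0$.
   Context: Each site $m=1,\dots,M$ carries one spinless fermion mode ($c_m,c_m^\dagger$, canonical anticommutation relations) and one spin-$1/2$ with Pauli matrices $\sigma_m^{x,y,z}$; $\sigma_m^{\pm}=\sigma_m^x\pm i\sigma_m^y$. The Hilbert space is the tensor product of the fermionic Fock space and the $M$ spin spaces; $H_{\gamma J}$ conserves the fermion number $\sum_m c_m^\dagger c_m$ and does not act on the spin at site $1$. *)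

From HB Require Import structures.
From mathcomp Require Import all_boot all_order all_algebra.
From mathcomp Require Import reals complex.
Set Implicit Arguments. Unset Strict Implicit. Unset Printing Implicit Defensive.
Import Order.TTheory GRing.Theory Num.Theory.
Local Open Scope ring_scope.

Section Chain.
Variable R : realType.
Variable M : nat.   (* number of sites; sites 1..M are 'I_M = {0,..,M-1} *)

(* Basis of the full Hilbert space (fermionic Fock space (x) M spins-1/2):
   a basis state is a pair (n, s) of occupation numbers n m in {0,1}
   (true = occupied) and spin configuration s m (true = up, false = down). *)
Definition basis : finType :=
  ({ffun 'I_M -> bool} * {ffun 'I_M -> bool})%type.

Definition state := basis -> R[i].
Definition op := basis -> basis -> R[i].

Definition op_apply (A : op) (psi : state) : state :=
  fun x => \sum_(y : basis) A x y * psi y.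
Definition op_mul (A B : op) : op :=
  fun x y => \sum_(z : basis) A x z * B z y.
Definition op_add (A B : op) : op := fun x y => A x y + B x y.
Definition op_opp (A : op) : op := fun x y => - A x y.
Definition op_scale (a : R[i]) (A : op) : op := fun x y => a * A x y.
Definition op_zero : op := fun _ _ => 0.
Definition op_adj (A : op) : op := fun x y => conjc (A y x).
Definition op_sum (I : finType) (F : I -> op) : op :=
  fun x y => \sum_(i : I) F i x y.

Definition set_occ (n : {ffun 'I_M -> bool}) (m : 'I_M) (b : bool) :=
  [ffun j => if j == m then b else n j].

Definition jw_sign (n : {ffun 'I_M -> bool}) (m : 'I_M) : R[i] :=
  (-1) ^+ #|[pred j : 'I_M | (j < m)%N && n j]|.

(* fermionic annihilation / creation operators (satisfy the CAR) *)
Definition c_ann (m : 'I_M) : op := fun x y =>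
  if [&& y.1 m, x.1 == set_occ y.1 m false & x.2 == y.2]
  then jw_sign y.1 m else 0.
Definition c_cre (m : 'I_M) : op := fun x y =>
  if [&& ~~ y.1 m, x.1 == set_occ y.1 m true & x.2 == y.2]
  then jw_sign y.1 m else 0.

(* a single-site 2x2 spin matrix P (P u v = <u|P|v>, true = up) acting on
   the spin at site k (identity on everything else) *)
Definition on_spin (k : 'I_M) (P : bool -> bool -> R[i]) : op := fun x y =>
  if (x.1 == y.1) && [forall j : 'I_M, (j != k) ==> (x.2 j == y.2 j)]
  then P (x.2 k) (y.2 k) else 0.

Definition pauli_x (u v : bool) : R[i] := if u != v then 1 else 0.
Definition pauli_y (u v : bool) : R[i] :=
  match u, v with
  | true, false => - Complex 0 1
  | false, true => Complex 0 1
  | _, _ => 0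
  end.
Definition pauli_z (u v : bool) : R[i] :=
  if u == v then (if u then 1 else -1) else 0.

Definition sigma_x (k : 'I_M) : op := on_spin k pauli_x.
Definition sigma_y (k : 'I_M) : op := on_spin k pauli_y.
Definition sigma_z (k : 'I_M) : op := on_spin k pauli_z.
Definition sigma_plus (k : 'I_M) : op :=
  op_add (sigma_x k) (op_scale (Complex 0 1) (sigma_y k)).
Definition sigma_minus (k : 'I_M) : op :=
  op_add (sigma_x k) (op_scale (- Complex 0 1) (sigma_y k)).

Definition num_fermions (x : basis) : nat := #|[pred j : 'I_M | x.1 j]|.

End Chain.

(* The chain with M = N.+1 sites; bond m (0 <= m < N) links sites
   m and m+1 (0-indexed). *)
Definition site_l (N : nat) (m : 'I_N) : 'I_N.+1 := widen_ord (leqnSn N) m.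
Definition site_r (N : nat) (m : 'I_N) : 'I_N.+1 := lift ord0 m.

Definition H_gammaJ (R : realType) (N : nat) (gamma J : 'I_N -> R)
  : op R N.+1 :=
  let hopJ m := op_scale (Complex (J m) 0)
      (op_mul (op_mul (c_cre R (site_r m)) (c_ann R (site_l m)))
              (sigma_plus R (site_r m))) in
  let hopG m := op_scale (Complex (gamma m) 0)
      (op_mul (c_cre R (site_r m)) (c_ann R (site_l m))) in
  op_add (op_sum (fun m => op_add (hopJ m) (op_adj (hopJ m))))
         (op_opp (op_sum (fun m => op_add (hopG m) (op_adj (hopG m))))).

(* the subspace: exactly one fermion, spin at site 1 (index 0) up *)
Definition in_sector (R : realType) (M : nat) (psi : state R M.+1) : Prop :=
  forall x : basis M.+1,
    ~~ ((num_fermions x == 1%N) && (x.2 ord0)) -> psi x = 0.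

Definition lin_indep (R : realType) (M : nat) (I : finType)
  (psi : I -> state R M) : Prop :=
  forall a : I -> R[i],
    (forall x, \sum_(i : I) a i * psi i x = 0) -> forall i, a i = 0.

From HB Require Import structures.
From mathcomp Require Import all_boot all_order all_algebra.
From mathcomp Require Import reals complex.
From mathcomp Require Import ring.
From Stdlib Require Import FunctionalExtensionality.
Import Order.TTheory GRing.Theory Num.Theory.
Set Implicit Arguments. Unset Strict Implicit. Unset Printing Implicit Defensive.
Local Open Scope ring_scope.

(* With a single fermion, H_{γJ} acts on amplitudes f p s (fermion on site p,
   spin configuration s) as a nearest-neighbour hopping in which bond m
   contributes J_m σ⁺_{m+1} - γ_m to the hop m -> m+1 and J_m σ⁻_{m+1} - γ_m to
   the hop m+1 -> m.  Put the fermion on the even sites 0, 2, ..., 2Z only.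
   Then Hψ vanishes on even sites, and on the odd site 2k+1 it vanishes iff
     (γ_{2k+1} - J_{2k+1} σ⁻_{2k+2}) f(2k+2) = (J_{2k} σ⁺_{2k+1} - γ_{2k}) f(2k).
   As σ⁻ is nilpotent and γ_{2k+1} ≠ 0, the operator on the left is invertible,
   so f(0) determines a zero mode.  Taking f(0) = δ_{s0} for the 2^{2Z} spin
   configurations s0 with spin up at site 1 gives independent zero modes, and
   they stay in the sector because no operator acts on the spin at site 1. *)

Section Operators.
Variables (R : realType) (M : nat).
Implicit Types (A B : op R M) (phi : state R M).

Lemma apply_add A B phi x :
  op_apply (op_add A B) phi x = op_apply A phi x + op_apply B phi x.
Proof. by rewrite /op_apply -big_split; apply: eq_bigr => y _; rewrite mulrDl. Qed.

Lemma apply_scale a A phi x :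
  op_apply (op_scale a A) phi x = a * op_apply A phi x.
Proof. by rewrite /op_apply mulr_sumr; apply: eq_bigr => y _; rewrite mulrA. Qed.

Lemma apply_opp A phi x : op_apply (op_opp A) phi x = - op_apply A phi x.
Proof. by rewrite /op_apply -sumrN; apply: eq_bigr => y _; rewrite mulNr. Qed.

Lemma apply_sum (I : finType) (F : I -> op R M) phi x :
  op_apply (op_sum F) phi x = \sum_i op_apply (F i) phi x.
Proof.
by rewrite /op_apply exchange_big; apply: eq_bigr => y _; rewrite mulr_suml.
Qed.

Lemma apply_mul A B phi : op_apply (op_mul A B) phi = op_apply A (op_apply B phi).
Proof.
apply: functional_extensionality => x; rewrite /op_apply /op_mul.
under eq_bigr do rewrite mulr_suml.
rewrite exchange_big; apply: eq_bigr => z _.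
by rewrite mulr_sumr; apply: eq_bigr => y _; rewrite mulrA.
Qed.

Lemma adjK A : op_adj (op_adj A) = A.
Proof. by do 2 apply: functional_extensionality => ?; exact: conjcK. Qed.

Lemma adj_mul A B : op_adj (op_mul A B) = op_mul (op_adj B) (op_adj A).
Proof.
do 2 apply: functional_extensionality => ?.
by rewrite /op_adj /op_mul rmorph_sum; apply: eq_bigr => z _; rewrite rmorphM mulrC.
Qed.

Lemma adj_scale a A : op_adj (op_scale a A) = op_scale (conjc a) (op_adj A).
Proof. by do 2 apply: functional_extensionality => ?; rewrite /op_adj rmorphM. Qed.

Lemma sum_delta (F : basis M -> R[i]) y0 c phi :
  (forall y, F y = if y == y0 then c else 0) -> \sum_y F y * phi y = c * phi y0.
Proof.
move=> DF; rewrite (bigD1 y0) //= DF eqxx big1 ?addr0 // => y /negbTE ne_y.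
by rewrite DF ne_y mul0r.
Qed.

Lemma lin_indep_delta (I : finType) (psi : I -> state R M) (x : I -> basis M) :
  (forall i j, psi i (x j) = (i == j)%:R) -> lin_indep psi.
Proof.
move=> psi_x a suma0 i; have := suma0 (x i).
rewrite (bigD1 i) //= big1 => [|j /negbTE ne_ji]; last by rewrite psi_x ne_ji mulr0.
by rewrite psi_x eqxx mulr1 addr0.
Qed.

End Operators.

Section Occupations.
Variable M : nat.
Implicit Types (n s t x y : {ffun 'I_M -> bool}) (m : 'I_M).

Lemma set_occE n m b j : set_occ n m b j = if j == m then b else n j.
Proof. by rewrite ffunE. Qed.

Lemma set_occ_id n m b : (n == set_occ n m b) = (n m == b).
Proof.
apply/eqP/eqP => [->|nm]; first by rewrite set_occE eqxx.
by apply/ffunP => j; rewrite set_occE; case: eqP => // ->.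
Qed.

Lemma set_occ_overwrite n m b c : set_occ (set_occ n m b) m c = set_occ n m c.
Proof. by apply/ffunP => j; rewrite !set_occE; case: eqP. Qed.

Lemma set_occ_other n m b j : j != m -> set_occ n m b j = n j.
Proof. by rewrite set_occE => /negbTE ->. Qed.

Lemma set_occ_falseE x y m :
  (y m && (x == set_occ y m false)) = (~~ x m && (y == set_occ x m true)).
Proof.
apply/andP/andP => [[ym /eqP ->]|[xm /eqP ->]].
  by rewrite set_occE eqxx set_occ_overwrite set_occ_id ym.
by rewrite set_occE eqxx set_occ_overwrite set_occ_id (negbTE xm).
Qed.

Lemma eq_off_site s t k :
  [forall j, (j != k) ==> (s j == t j)] = (t == set_occ s k (t k)).
Proof.
apply/forallP/eqP => [eq_st|->].
  apply/ffunP => j; rewrite set_occE; case: eqP => [->//|/eqP ne_jk].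
  by move/implyP: (eq_st j) => /(_ ne_jk) /eqP.
by move=> j; apply/implyP => ne_jk; rewrite set_occ_other.
Qed.

Definition vac : {ffun 'I_M -> bool} := [ffun => false].
Definition onehot (p : 'I_M) : {ffun 'I_M -> bool} := [ffun j => j == p].

Lemma onehotE p j : onehot p j = (j == p).
Proof. by rewrite ffunE. Qed.

Lemma onehot_inj : injective onehot.
Proof. by move=> p q /ffunP /(_ p); rewrite !onehotE eqxx => /esym/eqP. Qed.

Lemma set_occ_vac p : set_occ vac p true = onehot p.
Proof. by apply/ffunP => j; rewrite set_occE onehotE ffunE; case: eqP. Qed.

Lemma set_occ_onehot p : set_occ (onehot p) p false = vac.
Proof. by apply/ffunP => j; rewrite set_occE onehotE ffunE; case: eqP. Qed.

Lemma set_occ_eq_onehot n b p :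
  ~~ n b -> set_occ n b true = onehot p -> n = vac.
Proof.
move=> nb_free /ffunP Dn; have p_b : p = b.
  by apply/eqP; rewrite eq_sym -onehotE -Dn set_occE eqxx.
apply/ffunP => j; rewrite ffunE; case: (eqVneq j b) => [->|ne_jb].
  exact: negbTE.
by have := Dn j; rewrite set_occ_other // onehotE p_b (negbTE ne_jb).
Qed.

Lemma set_occ_eq_vac n a : n a -> set_occ n a false = vac -> n = onehot a.
Proof.
move=> na /ffunP Dn; apply/ffunP => j; rewrite onehotE.
case: (eqVneq j a) => [->//|ne_ja].
by have := Dn j; rewrite set_occ_other // ffunE.
Qed.

End Occupations.

Section Fermions.
Variables (R : realType) (M : nat).
Implicit Types (phi : state R M) (n s : {ffun 'I_M -> bool}) (m : 'I_M).

Lemma jw_sign_set_occ n m b : jw_sign R (set_occ n m b) m = jw_sign R n m.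
Proof.
congr (_ ^+ _); apply: eq_card => j; rewrite !inE set_occE.
by case: eqP => [->|//]; rewrite ltnn.
Qed.

Lemma jw_sign_eq1 n m : (forall j : 'I_M, (j < m)%N -> ~~ n j) -> jw_sign R n m = 1.
Proof.
move=> empty_below; rewrite /jw_sign (_ : #|_| = 0)%N ?expr0 //.
by apply: eq_card0 => j; rewrite !inE; case: ltnP => // /empty_below /negbTE.
Qed.

Lemma jw_sign_vac m : jw_sign R (vac M) m = 1.
Proof. by apply: jw_sign_eq1 => j _; rewrite ffunE. Qed.

Lemma jw_sign_onehot m : jw_sign R (onehot m) m = 1.
Proof.
by apply: jw_sign_eq1 => j lt_jm; rewrite onehotE; apply/eqP => ej; rewrite ej ltnn in lt_jm.
Qed.

Lemma conj_jw_sign n m : conjc (jw_sign R n m) = jw_sign R n m.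
Proof. by rewrite /jw_sign rmorphXn rmorphN rmorph1. Qed.

Lemma adj_cre m : op_adj (c_cre R m) = c_ann R m.
Proof.
apply: functional_extensionality => x; apply: functional_extensionality => y.
rewrite /op_adj /c_cre /c_ann !andbA set_occ_falseE (eq_sym y.2).
case: ifP => [/andP[/andP[_ /eqP ->] _]|_]; last by rewrite conjc0.
by rewrite conj_jw_sign jw_sign_set_occ.
Qed.

Lemma adj_ann m : op_adj (c_ann R m) = c_cre R m.
Proof. by rewrite -adj_cre adjK. Qed.

Lemma apply_ann m phi n s :
  op_apply (c_ann R m) phi (n, s) =
  if n m then 0 else jw_sign R n m * phi (set_occ n m true, s).
Proof.
rewrite /op_apply (@sum_delta _ _ _ (set_occ n m true, s) (if n m then 0 else jw_sign R n m)).
  by case: ifP; rewrite ?mul0r.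
move=> [n' s'] /=; rewrite /c_ann /= andbA set_occ_falseE xpair_eqE (eq_sym s) -andbA.
case: (n m) => /=; first by rewrite if_same.
by case: ifP => [/andP[/eqP -> _]|//]; rewrite jw_sign_set_occ.
Qed.

Lemma apply_cre m phi n s :
  op_apply (c_cre R m) phi (n, s) =
  if n m then jw_sign R n m * phi (set_occ n m false, s) else 0.
Proof.
rewrite /op_apply (@sum_delta _ _ _ (set_occ n m false, s) (if n m then jw_sign R n m else 0)).
  by case: ifP; rewrite ?mul0r.
move=> [n' s'] /=; rewrite /c_cre /= andbA -set_occ_falseE xpair_eqE (eq_sym s) -andbA.
case: (n m) => /=; last by rewrite if_same.
by case: ifP => [/andP[/eqP -> _]|//]; rewrite jw_sign_set_occ.
Qed.

End Fermions.

Section Spins.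
Variables (R : realType) (M : nat).
Implicit Types (phi : state R M) (n s t : {ffun 'I_M -> bool}) (k : 'I_M).
Implicit Types (P Q : bool -> bool -> R[i]) (f : {ffun 'I_M -> bool} -> R[i]).
Implicit Types (g j : R[i]) (q : 'I_M).

(* σ⁺ and σ⁻ = (σ⁺)† on functions of the spins; the factor 2 comes from
   σ± = σx ± iσy. *)
Definition raise k f s : R[i] := if s k then 2 * f (set_occ s k false) else 0.
Definition lower k f s : R[i] := if s k then 0 else 2 * f (set_occ s k true).

Lemma apply_on_spin k P phi n s :
  op_apply (on_spin k P) phi (n, s) =
  P (s k) true * phi (n, set_occ s k true) + P (s k) false * phi (n, set_occ s k false).
Proof.
rewrite /op_apply.
rewrite -(@sum_delta _ _ (fun y => if y == (n, set_occ s k true) then P (s k) true else 0)) //.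
rewrite -(@sum_delta _ _ (fun y => if y == (n, set_occ s k false) then P (s k) false else 0)) //.
rewrite -big_split; apply: eq_bigr => -[n' t] _ /=.
rewrite -mulrDl /on_spin /= eq_off_site !xpair_eqE (eq_sym n').
have ne_at_k b : t k != b -> (t == set_occ s k b) = false.
  by apply: contraNF => /eqP ->; rewrite set_occE eqxx.
by case: (t k) (ne_at_k (~~ t k)) => /= -> //; rewrite andbF ?addr0 ?add0r.
Qed.

Lemma adj_on_spin k P : op_adj (on_spin k P) = on_spin k (fun u v => conjc (P v u)).
Proof.
apply: functional_extensionality => x; apply: functional_extensionality => y.
rewrite /op_adj /on_spin (eq_sym y.1).
under eq_forallb do rewrite (eq_sym (y.2 _)).
by case: ifP; rewrite ?conjc0.
Qed.

Lemma on_spin_addZ k P Q a :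
  op_add (on_spin k P) (op_scale a (on_spin k Q)) = on_spin k (fun u v => P u v + a * Q u v).
Proof.
do 2 apply: functional_extensionality => ?.
by rewrite /op_add /op_scale /on_spin; case: ifP; rewrite ?mulr0 ?addr0.
Qed.

Lemma sigma_plusE k : sigma_plus R k = on_spin k (fun u v => if u && ~~ v then 2 else 0).
Proof.
rewrite /sigma_plus on_spin_addZ; congr on_spin.
do 2 apply: functional_extensionality => -[]; rewrite /pauli_x /pauli_y /= ?mulr0 ?addr0 ?add0r //.
  by rewrite mulrN -expr2 sqr_i opprK.
by rewrite -expr2 sqr_i subrr.
Qed.

Lemma adj_sigma_plusE k :
  op_adj (sigma_plus R k) = on_spin k (fun u v => if ~~ u && v then 2 else 0).
Proof.
rewrite sigma_plusE adj_on_spin; congr on_spin.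
by do 2 apply: functional_extensionality => ?; rewrite (fun_if conjc) conjc0 rmorph_nat andbC.
Qed.

Lemma apply_sigma_plus k phi n s :
  op_apply (sigma_plus R k) phi (n, s) = raise k (fun t => phi (n, t)) s.
Proof.
by rewrite sigma_plusE apply_on_spin /raise; case: (s k); rewrite /= !mul0r ?addr0 ?add0r.
Qed.

Lemma apply_adj_sigma_plus k phi n s :
  op_apply (op_adj (sigma_plus R k)) phi (n, s) = lower k (fun t => phi (n, t)) s.
Proof.
by rewrite adj_sigma_plusE apply_on_spin /lower; case: (s k); rewrite /= !mul0r ?addr0 ?add0r.
Qed.

Definition hop_raise g j k f s : R[i] := j * raise k f s - g * f s.
Definition hop_lower g j k f s : R[i] := j * lower k f s - g * f s.

(* The inverse of g - j σ⁻, namely g⁻¹ (1 + (j/g) σ⁻) since (σ⁻)² = 0. *)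
Definition lower_resolvent g j k f s : R[i] := (f s + j / g * lower k f s) / g.

Lemma hop_lower_resolvent g j k f s :
  g != 0 -> hop_lower g j k (lower_resolvent g j k f) s = - f s.
Proof.
move=> g_neq0; rewrite /hop_lower /lower_resolvent /lower set_occE eqxx.
by case: (s k); field.
Qed.

Definition up_supported q f := forall s, ~~ s q -> f s = 0.

Lemma hop_raise_up q k g j f :
  q != k -> up_supported q f -> up_supported q (hop_raise g j k f).
Proof.
move=> ne_qk f_up s s_q; rewrite /hop_raise /raise !f_up ?set_occ_other //.
by rewrite !mulr0 if_same mulr0 subr0.
Qed.

Lemma lower_resolvent_up q k g j f :
  q != k -> up_supported q f -> up_supported q (lower_resolvent g j k f).
Proof.
move=> ne_qk f_up s s_q; rewrite /lower_resolvent /lower !f_up ?set_occ_other //.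
by rewrite !mulr0 if_same mulr0 addr0 mul0r.
Qed.

End Spins.

Section OneParticle.
Variables (R : realType) (M : nat).
Local Notation spins := {ffun 'I_M -> bool}.
Implicit Types (f : 'I_M -> spins -> R[i]) (g : spins -> R[i]) (n s : spins).

Definition one_particle f : state R M :=
  fun x => \sum_p (if x.1 == onehot p then f p x.2 else 0).

Definition vacuum_state g : state R M := fun x => if x.1 == vac M then g x.2 else 0.

Lemma one_particle_onehot f q s : one_particle f (onehot q, s) = f q s.
Proof.
rewrite /one_particle (bigD1 q) //= eqxx big1 ?addr0 // => p ne_pq.
by rewrite (inj_eq (@onehot_inj M)) eq_sym (negbTE ne_pq).
Qed.

Lemma one_particle_out f n s :
  (forall p, (n == onehot p) = false) -> one_particle f (n, s) = 0.
Proof. by move=> n_not1; rewrite /one_particle big1 // => p _; rewrite n_not1. Qed.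

Lemma num_fermions_onehot q s : num_fermions (onehot q, s) = 1%N.
Proof. by rewrite /num_fermions (eq_card (B := pred1 q)) ?card1 // => j; rewrite !inE onehotE. Qed.

Lemma ann_one_particle b f : op_apply (c_ann R b) (one_particle f) = vacuum_state (f b).
Proof.
apply: functional_extensionality => -[n s]; rewrite apply_ann /vacuum_state /=.
case: (eqVneq n (vac M)) => [->|ne_n_vac].
  by rewrite ffunE jw_sign_vac mul1r set_occ_vac one_particle_onehot.
case: ifPn => // nb_free; rewrite one_particle_out ?mulr0 // => p.
by apply/negbTE/eqP => /(set_occ_eq_onehot nb_free) n_vac; rewrite n_vac eqxx in ne_n_vac.
Qed.

Lemma cre_vacuum_state a g :
  op_apply (c_cre R a) (vacuum_state g) = one_particle (fun p s => if p == a then g s else 0).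
Proof.
apply: functional_extensionality => -[n s]; rewrite apply_cre /vacuum_state /=.
case: (pickP (fun p => n == onehot p)) => [q /eqP -> | n_not1].
  rewrite one_particle_onehot onehotE (eq_sym a); case: eqP => [->|//].
  by rewrite jw_sign_onehot mul1r set_occ_onehot eqxx.
rewrite one_particle_out //; case: ifPn => // na; case: eqP; last by rewrite mulr0.
by move/(set_occ_eq_vac na) => n1; have := n_not1 a; rewrite n1 eqxx.
Qed.

Lemma raise_one_particle k f :
  op_apply (sigma_plus R k) (one_particle f) = one_particle (fun p => raise k (f p)).
Proof.
apply: functional_extensionality => -[n s]; rewrite apply_sigma_plus.
case: (pickP (fun p => n == onehot p)) => [q /eqP -> | n_not1].
  by rewrite /raise !one_particle_onehot.
by rewrite /raise !one_particle_out // mulr0 if_same.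
Qed.

Lemma lower_one_particle k f :
  op_apply (op_adj (sigma_plus R k)) (one_particle f) = one_particle (fun p => lower k (f p)).
Proof.
apply: functional_extensionality => -[n s]; rewrite apply_adj_sigma_plus.
case: (pickP (fun p => n == onehot p)) => [q /eqP -> | n_not1].
  by rewrite /lower !one_particle_onehot.
by rewrite /lower !one_particle_out // mulr0 if_same.
Qed.

Lemma one_particle0 : one_particle (fun _ _ => 0) = fun _ => 0.
Proof.
by apply: functional_extensionality => x; rewrite /one_particle big1 // => p; rewrite if_same.
Qed.

End OneParticle.

Lemma one_particle_in_sector (R : realType) (M : nat)
    (f : 'I_M.+1 -> {ffun 'I_M.+1 -> bool} -> R[i]) :
  (forall p, up_supported ord0 (f p)) -> in_sector (one_particle f).
Proof.
move=> f_up [n s] /=; case: (pickP (fun p => n == onehot p)) => [q /eqP -> | n_not1].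
  by rewrite num_fermions_onehot one_particle_onehot => /f_up.
by rewrite one_particle_out.
Qed.

Section OpenChain.
Variables (R : realType) (N : nat) (gamma J : 'I_N -> R).
Local Notation spins := {ffun 'I_N.+1 -> bool}.
Implicit Types (f : 'I_N.+1 -> spins -> R[i]) (p : 'I_N.+1) (s : spins).

Definition H1_gammaJ f p s : R[i] :=
  \sum_m ((if p == site_r m then
             hop_raise (Complex (gamma m) 0) (Complex (J m) 0) (site_r m) (f (site_l m)) s
           else 0)
        + (if p == site_l m then
             hop_lower (Complex (gamma m) 0) (Complex (J m) 0) (site_r m) (f (site_r m)) s
           else 0)).

Lemma H_gammaJ_one_particle f :
  op_apply (H_gammaJ gamma J) (one_particle f) = one_particle (H1_gammaJ f).
Proof.
have conj_real (a : R) : conjc (Complex a 0) = Complex a 0.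
  by apply/eqP; rewrite eq_complex /= oppr0 !eqxx.
apply: functional_extensionality => -[n s].
rewrite /H_gammaJ apply_add apply_opp !apply_sum -sumrB.
under eq_bigr => m _ do rewrite !apply_add !adj_scale !adj_mul adj_cre adj_ann !conj_real
  !apply_scale !apply_mul raise_one_particle !ann_one_particle !cre_vacuum_state lower_one_particle.
case: (pickP (fun p => n == onehot p)) => [q /eqP -> | n_not1].
  rewrite one_particle_onehot; apply: eq_bigr => m _; rewrite !one_particle_onehot.
  rewrite /hop_raise /hop_lower /lower.
  by case: (q == site_r m); case: (q == site_l m); rewrite ?mulr0 ?if_same; ring.
rewrite one_particle_out // big1 // => m _; rewrite !one_particle_out //.
by rewrite !mulr0 !addr0 subrr.
Qed.

Lemma site_rE (m : 'I_N) : site_r m = m.+1 :> nat.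
Proof. exact: lift0. Qed.

Lemma H1_gammaJ_free_neighbours f p s :
  (forall q : 'I_N.+1, (q.+1 == p) || (p.+1 == q) -> forall t, f q t = 0) ->
  H1_gammaJ f p s = 0.
Proof.
move=> f_nb; rewrite /H1_gammaJ big1 // => m _.
have l_free : p = site_r m -> forall t, f (site_l m) t = 0.
  by move=> pE; apply: f_nb; rewrite pE site_rE eqxx.
have r_free : p = site_l m -> forall t, f (site_r m) t = 0.
  by move=> pE; apply: f_nb; rewrite pE site_rE eqxx orbT.
rewrite /hop_raise /hop_lower /raise /lower.
case: eqP => [/l_free l0|_]; case: eqP => [/r_free r0|_];
  by rewrite ?l0 ?r0 ?mulr0 ?if_same ?mulr0 ?subr0 ?addr0.
Qed.

Lemma H1_gammaJ_bulk f (m0 m1 : 'I_N) s :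
  m1 = m0.+1 :> nat ->
  H1_gammaJ f (site_r m0) s =
  hop_raise (Complex (gamma m0) 0) (Complex (J m0) 0) (site_r m0) (f (site_l m0)) s
  + hop_lower (Complex (gamma m1) 0) (Complex (J m1) 0) (site_r m1) (f (site_r m1)) s.
Proof.
move=> m1E; have rl m : (site_r m0 == site_l m) = (m == m1).
  by rewrite -!val_eqE /= /bump leq0n add1n m1E eq_sym.
have rr m : (site_r m0 == site_r m) = (m == m0).
  by rewrite (inj_eq (@lift_inj _ ord0)) eq_sym.
have ne_m10 : m1 != m0 by rewrite -val_eqE /= m1E gtn_eqF.
rewrite /H1_gammaJ (bigD1 m0) // (bigD1 m1) //= big1 => [|m /andP[ne_m1 ne_m0]].
  by rewrite !rr !rl !eqxx (negbTE ne_m10) eq_sym (negbTE ne_m10) addr0 add0r addr0.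
by rewrite rr rl (negbTE ne_m0) (negbTE ne_m1) addr0.
Qed.

End OpenChain.

Section ZeroModes.
Variables (R : realType) (N : nat) (gamma J : 'I_N -> R).
Local Notation spins := {ffun 'I_N.+1 -> bool}.
Implicit Types (s : spins) (k : nat) (p : 'I_N.+1).

(* Couplings indexed by nat, with junk value 0 beyond the last bond. *)
Definition coupling (c : 'I_N -> R) (i : nat) : R[i] :=
  if insub i is Some m then Complex (c m) 0 else 0.

Definition site (i : nat) : 'I_N.+1 := inord i.

Lemma couplingE c (m : 'I_N) : coupling c m = Complex (c m) 0.
Proof. by rewrite /coupling valK. Qed.

Lemma siteE i : (i <= N)%N -> site i = i :> nat.
Proof. exact: inordK. Qed.

Lemma site_neq0 i : (0 < i <= N)%N -> ord0 != site i.
Proof. by case/andP=> i_gt0 le_iN; rewrite -val_eqE /= siteE // neq_ltn i_gt0. Qed.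

Lemma site_r_site (m : 'I_N) : site_r m = site m.+1.
Proof. by apply: ord_inj; rewrite siteE // site_rE. Qed.

Fixpoint chain_amp (s0 : spins) k : spins -> R[i] :=
  if k is k.+1 then
    lower_resolvent (coupling gamma k.*2.+1) (coupling J k.*2.+1) (site k.*2.+2)
      (hop_raise (coupling gamma k.*2) (coupling J k.*2) (site k.*2.+1) (chain_amp s0 k))
  else fun s => (s == s0)%:R.

Definition zero_mode (s0 : spins) p : spins -> R[i] :=
  if odd p then fun=> 0 else chain_amp s0 p./2.

Lemma zero_mode_origin (s0 : spins) s : zero_mode s0 ord0 s = (s == s0)%:R.
Proof. by []. Qed.

Lemma chain_amp_step (s0 : spins) k s :
  coupling gamma k.*2.+1 != 0 ->
  hop_raise (coupling gamma k.*2) (coupling J k.*2) (site k.*2.+1) (chain_amp s0 k) s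
  + hop_lower (coupling gamma k.*2.+1) (coupling J k.*2.+1) (site k.*2.+2) (chain_amp s0 k.+1) s
  = 0.
Proof. by move=> g_neq0; rewrite /= hop_lower_resolvent // addrN. Qed.

Lemma chain_amp_up (s0 : spins) k :
  s0 ord0 -> (k.*2 <= N)%N -> up_supported ord0 (chain_amp s0 k).
Proof.
move=> s0_up; elim: k => [_ s s_down | k IHk le_kN] /=.
  by case: eqP => // s_s0; rewrite s_s0 s0_up in s_down.
have le_k1N : (k.*2.+1 <= N)%N by apply: ltnW; rewrite -doubleS.
apply: lower_resolvent_up; first by apply: site_neq0; rewrite -doubleS le_kN.
by apply: hop_raise_up; [apply: site_neq0; rewrite le_k1N | apply: IHk; apply: ltnW].
Qed.

Lemma zero_mode_up (s0 : spins) p : s0 ord0 -> up_supported ord0 (zero_mode s0 p).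
Proof.
move=> s0_up; rewrite /zero_mode; case: ifP => // _.
apply: chain_amp_up => //; rewrite halfK; apply: leq_trans (leq_subr _ _) _.
by rewrite -ltnS.
Qed.

Lemma zero_mode_H1 (s0 : spins) :
  ~~ odd N -> (forall m, gamma m != 0) -> H1_gammaJ gamma J (zero_mode s0) = fun _ _ => 0.
Proof.
move=> even_N gamma_neq0; apply: functional_extensionality => p.
apply: functional_extensionality => s.
case: (boolP (odd p)) => [odd_p | even_p]; last first.
  apply: H1_gammaJ_free_neighbours => q nb t; rewrite /zero_mode ifT //.
  by case/orP: nb => /eqP qE; move: even_p; rewrite -qE /= ?negbK.
set k := p./2; have pE : p = k.*2.+1 :> nat by rewrite -[LHS]odd_double_half odd_p.
have lt_pN : (p < N)%N.
  by rewrite ltn_neqAle -ltnS ltn_ord andbT; apply: contraNneq even_N => <-.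
have lt_2kN : (k.*2 < N)%N by apply: ltnW; rewrite -pE.
pose m0 := Ordinal lt_2kN; pose m1 := Ordinal lt_pN.
have -> : p = site_r m0 by apply: ord_inj; rewrite site_rE pE.
have g1_neq0 : coupling gamma k.*2.+1 != 0.
  by rewrite -pE (couplingE gamma m1) eq_complex /= negb_and gamma_neq0.
have l_amp : zero_mode s0 (site_l m0) = chain_amp s0 k.
  by rewrite /zero_mode /= odd_double doubleK.
have r_amp : zero_mode s0 (site_r m1) = chain_amp s0 k.+1.
  by rewrite /zero_mode site_rE /= pE /= odd_double doubleK.
rewrite (H1_gammaJ_bulk _ _ _ (m1 := m1)) //= l_amp r_amp !site_r_site -!couplingE /= pE.
exact: chain_amp_step.
Qed.

End ZeroModes.

Section UpConfigs.
Variable N : nat.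

Lemma card_configs : #|{ffun 'I_N -> bool}| = (2 ^ N)%N.
Proof. by rewrite card_ffun card_bool card_ord. Qed.

Definition up_config (i : 'I_(2 ^ N)) : {ffun 'I_N.+1 -> bool} :=
  [ffun j => if unlift ord0 j is Some j' then enum_val (cast_ord (esym card_configs) i) j'
             else true].

Lemma up_config_up i : up_config i ord0.
Proof. by rewrite ffunE unlift_none. Qed.

Lemma up_config_inj : injective up_config.
Proof.
move=> i i' /ffunP eq_ii'.
suff : enum_val (cast_ord (esym card_configs) i) = enum_val (cast_ord (esym card_configs) i')
  by move/enum_val_inj/cast_ord_inj.
by apply/ffunP => j; have := eq_ii' (lift ord0 j); rewrite !ffunE liftK.
Qed.

End UpConfigs.

Theorem mainTheorem2 (R : realType) (Z : nat) (hZ : (1 <= Z)%N)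
  (gamma J : 'I_(2 * Z) -> R) (hgamma : forall m, gamma m != 0) :
  exists psi : 'I_(2 ^ (2 * Z)) -> state R (2 * Z).+1,
    lin_indep psi /\
    (forall k, in_sector (psi k)) /\
    (forall k, op_apply (H_gammaJ gamma J) (psi k) = (fun _ => 0)).
Proof.
have even_N : ~~ odd (2 * Z) by rewrite mul2n odd_double.
exists (fun i => one_particle (zero_mode gamma J (up_config i))); split; [|split].
- apply: (@lin_indep_delta _ _ _ _ (fun i => (onehot ord0, up_config i))) => i j.
  by rewrite one_particle_onehot zero_mode_origin (inj_eq (@up_config_inj _)) eq_sym.
- by move=> i; apply: one_particle_in_sector => p; apply: zero_mode_up; apply: up_config_up.
- by move=> i; rewrite H_gammaJ_one_particle zero_mode_H1 // one_particle0.
Qed.
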